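(* Consider an instance of \textbf{LTSP} in which there is $k\in\mathbb N$ such that $s(f)=k$ and $n(f)=1$ for every file $f\in\mathcal F$. Then $\mathcal B_1=\emptyset$ is optimal, i.e., $v(\emptyset)\le v(\mathcal B_1)$ for every set $\mathcal B_1$ of mini-batches.
   Context: A single-track tape stores a sequence of files $\mathcal F=(f_1,\dots,f_n)$ laid out contiguously from left to right: file $f$ occupies blocks $l(f),\dots,r(f)$, has size $s(f)=r(f)-l(f)+1$, $l(f_1)=1$, $l(f_{i+1})=r(f_i)+1$, and $m=\sum_f s(f)$. The tape moves one block per time step; at time $0$ the head is at position $m$. A file is read when the head traverses it rightwards from $l(f)$ to $r(f)$. $\mathcal R$ is a finite set of requests, all released at time $0$, each associated with a file $f(r)$; $\mathcal R(f)$ is the set of requests for $f$ and $n(f)=|\mathcal R(f)|$. A request's response time is the time at which the head starts a rightward reading traversal of its file (all pending requests of a file are serviced simultaneously). \textbf{LTSP} asks to minimize the sum of response times. A mini-batch is a pair $b=(f,f')$ of files with $l(f)\le l(f')$; $l(b)=l(f)$, $r(b)=r(f')$, $s(b)=r(b)-l(b)+1$, and $\mathcal F(b)$ is the set of files $g$ with $l(b)\le l(g)$ and $r(g)\le r(b)$; it is atomic if $|\mathcal F(b)|=1$. Given a set $\mathcal B_1$ of mini-batches, the associated schedule is: Phase 1, the head moves leftwards from $m$ to position $1$, and whenever it reaches $l(b)$ for some $b\in\mathcal B_1$ it executes $b$ (moves rightwards from $l(b)$ to $r(b)$, reading every file of $\mathcal F(b)$, then returns to $l(b)$) before continuing leftwards,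 mini-batches thus being executed in decreasing order of their left endpoints; Phase 2, the head moves rightwards from position $1$ to $m$, reading every file. $v(\mathcal B_1)$ denotes the total response time of this schedule. *)

From mathcomp Require Import all_boot.
Set Implicit Arguments. Unset Strict Implicit. Unset Printing Implicit Defensive.

(* An LTSP instance: files f_0 .. f_{n-1} (0-indexed), sizes s : nat -> nat,
   request counts nr : nat -> nat (nr i = n(f_i)). *)

Definition lpos (s : nat -> nat) (i : nat) : nat := 1 + \sum_(j < i) s j.
Definition rpos (s : nat -> nat) (i : nat) : nat := lpos s i + s i - 1.
(* m = total number of blocks *)
Definition tape_len (n : nat) (s : nat -> nat) : nat := \sum_(j < n) s j.

(* A mini-batch is a pair (i, j) of file indices with l(f_i) <= l(f_j). *)
Definition minibatch := (nat * nat)%type.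
Definition lb (s : nat -> nat) (b : minibatch) : nat := lpos s b.1.
Definition rb (s : nat -> nat) (b : minibatch) : nat := rpos s b.2.
Definition sb (s : nat -> nat) (b : minibatch) : nat := rb s b - lb s b + 1.
Definition in_batch (s : nat -> nat) (b : minibatch) (g : nat) : bool :=
  (lb s b <= lpos s g) && (rpos s g <= rb s b).

(* A set B1 of mini-batches, listed in an execution order of the schedule:
   duplicate-free, every pair is a mini-batch of the instance, and executed in
   non-increasing order of left endpoints (ties in any order). *)
Definition valid_batches (n : nat) (s : nat -> nat) (bs : seq minibatch) : bool :=
  [&& uniq bs,
      all (fun b : minibatch => [&& b.1 < n, b.2 < n & lpos s b.1 <= lpos s b.2]) bs
    & sorted (fun b c : minibatch => lb s c <= lb s b) bs].

(* Time at which execution of the t-th batch of bs starts: the head travels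
   leftwards from m to l(b_t) (m - l(b_t) steps) plus the duration of all
   previously executed batches; executing b (traversing its s(b) blocks
   rightwards and coming back) takes 2 s(b) steps. *)
Definition batch_start (n : nat) (s : nat -> nat) (bs : seq minibatch) (t : nat) : nat :=
  (tape_len n s - lb s (nth (0, 0) bs t))
  + \sum_(u < t) 2 * sb s (nth (0, 0) bs u).

(* Time at which Phase 2 starts (head at position 1). *)
Definition phase2_start (n : nat) (s : nat -> nat) (bs : seq minibatch) : nat :=
  (tape_len n s - 1) + \sum_(b <- bs) 2 * sb s b.

(* Response time of (the requests of) file g: first rightward reading traversal. *)
Definition response (n : nat) (s : nat -> nat) (bs : seq minibatch) (g : nat) : nat :=
  let t := find (fun b => in_batch s b g) bs in
  if t < size bs then batch_start n s bs t + (lpos s g - lb s (nth (0, 0) bs t))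
  else phase2_start n s bs + (lpos s g - 1).

Definition v (n : nat) (s nr : nat -> nat) (bs : seq minibatch) : nat :=
  \sum_(g < n) nr g * response n s bs g.

From mathcomp Require Import all_boot.
From mathcomp Require Import zify.

Set Implicit Arguments.
Unset Strict Implicit.

(* Compare the schedule of B1 with the empty schedule file by file.  A file f
   read by a batch b is reached at time (m - l(b)) + D(f) + (l(f) - l(b)),
   where D(f) is the total duration of the batches executed before, whereas
   without batches it is reached at (m - 1) + (l(f) - 1); a file left to
   Phase 2 simply waits D(f) longer.  Hence
     resp_B1(f) + 2 (l(b) - 1) = resp_0(f) + D(f),
   and it suffices to show that the gains 2 (l(b) - 1) add up to at most the
   delays D(f).  Group both sums by batch.  If b starts at the i-th file, it
   reads at most s(b) / k files, each gaining 2 i k, so b contributes at most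
   2 i s(b) to the gains; it also delays every file read after it by 2 s(b),
   and since batches run in decreasing order of left endpoints, the i files
   left of b are all read after it. *)

(* The index of the batch reading g, or [size bs] if g is read in Phase 2. *)
Definition serving_batch (s : nat -> nat) (bs : seq minibatch) (g : nat) : nat :=
  find (fun b => in_batch s b g) bs.

Definition batch_gain (s : nat -> nat) (bs : seq minibatch) (g : nat) : nat :=
  let t := serving_batch s bs g in
  if t < size bs then lb s (nth (0, 0) bs t) - 1 else 0.

Definition batch_delay (s : nat -> nat) (bs : seq minibatch) (g : nat) : nat :=
  \sum_(u < size bs | u < serving_batch s bs g) 2 * sb s (nth (0, 0) bs u).

Lemma lpos_le_tape_len n s i : i < n -> 0 < s i -> lpos s i <= tape_len n s.
Proof.
move=> lt_in s_gt0; rewrite /lpos /tape_len -(subnKC lt_in) big_split_ord /=.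
by rewrite big_ord_recr /=; lia.
Qed.

Lemma card_ord_ltn n i : i <= n -> #|[set g : 'I_n | g < i]| = i.
Proof.
move=> le_in; rewrite -sum1dep_card -(big_ord_widen _ (fun=> 1) le_in).
by rewrite sum_nat_const card_ord muln1.
Qed.

Lemma card_ord_interval n i j : j < n -> #|[set g : 'I_n | i <= g <= j]| = j.+1 - i.
Proof.
move=> lt_jn; have := cardsID [set g : 'I_n | g < i] [set g : 'I_n | g < j.+1].
have -> : [set g : 'I_n | g < j.+1] :&: [set g : 'I_n | g < i] =
    [set g : 'I_n | g < minn i j.+1].
  by apply/setP => g; rewrite !inE leq_min andbC.
have -> : [set g : 'I_n | g < j.+1] :\: [set g : 'I_n | g < i] =
    [set g : 'I_n | i <= g <= j].
  by apply/setP => g; rewrite !inE -leqNgt ltnS.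
have le_min : minn i j.+1 <= n by lia.
by rewrite !card_ord_ltn //; lia.
Qed.

Section Accounting.
Variables (n : nat) (s : nat -> nat) (bs : seq minibatch).
Local Notation B u := (nth (0, 0) bs u).
Local Notation T := (serving_batch s bs).

Lemma serving_batch_in g : T g < size bs -> in_batch s (B (T g)) g.
Proof. by rewrite -has_find; apply: nth_find. Qed.

Lemma sum_batch_gain :
  \sum_(g < n) batch_gain s bs g =
  \sum_(u < size bs) (lb s (B u) - 1) * #|[set g : 'I_n | T g == u]|.
Proof.
have gainE g : batch_gain s bs g = \sum_(u < size bs | T g == u) (lb s (B u) - 1).
  rewrite /batch_gain; case: ltnP => [lt_T | le_T].
    by rewrite (big_pred1 (Ordinal lt_T)) // => u; rewrite eq_sym -val_eqE.
  by rewrite big_pred0 // => u; rewrite gtn_eqF // (leq_trans (ltn_ord u) le_T).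
rewrite (eq_bigr _ (fun (g : 'I_n) _ => gainE g)).
rewrite (exchange_big_dep xpredT) //=; apply: eq_bigr => u _.
by rewrite sum_nat_cond_const mulnC.
Qed.

Lemma sum_batch_delay :
  \sum_(g < n) batch_delay s bs g =
  \sum_(u < size bs) #|[set g : 'I_n | u < T g]| * (2 * sb s (B u)).
Proof.
rewrite (exchange_big_dep xpredT) //=; apply: eq_bigr => u _.
exact: sum_nat_cond_const.
Qed.
End Accounting.

Section ValidBatches.
Variables (n : nat) (s : nat -> nat) (bs : seq minibatch).
Hypothesis bs_valid : valid_batches n s bs.
Local Notation B u := (nth (0, 0) bs u).
Local Notation T := (serving_batch s bs).

Lemma valid_batches_nth u : u < size bs ->
  [/\ (B u).1 < n, (B u).2 < n & lpos s (B u).1 <= lpos s (B u).2].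
Proof.
move=> lt_u; case/and3P: bs_valid => _ /allP/(_ _ (mem_nth (0, 0) lt_u)).
by case/and3P.
Qed.

Lemma served_later u g : u < size bs -> lpos s g < lb s (B u) -> u < T g.
Proof.
move=> lt_u lt_g; rewrite ltnNge; apply/negP => le_Tu.
have lt_T : T g < size bs := leq_ltn_trans le_Tu lt_u.
have /andP[le_g _] := serving_batch_in lt_T.
have le_lb : lb s (B u) <= lb s (B (T g)).
  have lb_tr : transitive (fun b c : minibatch => lb s c <= lb s b).
    by move=> b a c le_ba le_cb; apply: leq_trans le_cb le_ba.
  case/and3P: bs_valid => _ _ /(sorted_leq_nth lb_tr (fun b => leqnn _) (0, 0)).
  by apply.
by move: le_g; rewrite leqNgt (leq_trans lt_g le_lb).
Qed.

Hypothesis s_gt0 : forall i, i < n -> 0 < s i.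

Lemma response_accounting g :
  response n s bs g + 2 * batch_gain s bs g =
  response n s [::] g + batch_delay s bs g.
Proof.
rewrite /response /batch_gain -/(T g) /= /phase2_start big_nil addn0.
case: ltnP => [lt_T | le_T].
  have delayE : batch_delay s bs g = \sum_(u < T g) 2 * sb s (B u).
    by rewrite /batch_delay (big_ord_widen _ (fun u => 2 * sb s (B u)) (ltnW lt_T)).
  have /andP[le_g _] := serving_batch_in lt_T.
  have [lt_1n _ _] := valid_batches_nth lt_T.
  have le_tape := lpos_le_tape_len lt_1n (s_gt0 lt_1n).
  have lpos_gt0 : 0 < lpos s (B (T g)).1 by [].
  by move: le_g; rewrite delayE /batch_start /lb; lia.
have delayE : batch_delay s bs g = \sum_(b <- bs) 2 * sb s b.
  rewrite /batch_delay.
  have -> : T g = size bs by apply/eqP; rewrite eqn_leq le_T find_size.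
  by rewrite (big_nth (0, 0)) big_mkord; apply: eq_bigl => u; rewrite ltn_ord.
by rewrite delayE; lia.
Qed.

Lemma v_accounting nr :
  v n s nr bs + 2 * \sum_(g < n) nr g * batch_gain s bs g =
  v n s nr [::] + \sum_(g < n) nr g * batch_delay s bs g.
Proof.
rewrite /v big_distrr -!big_split; apply: eq_bigr => g _ /=.
by rewrite -mulnDr -response_accounting mulnDr mulnCA.
Qed.
End ValidBatches.

Section UniformSizes.
Variables (n k : nat) (s : nat -> nat).
Hypotheses (k_gt0 : 0 < k) (s_const : forall i, i < n -> s i = k).

Lemma lpos_const i : i <= n -> lpos s i = (i * k).+1.
Proof.
move=> le_in; rewrite /lpos add1n (eq_bigr (fun=> k)) => [|j _].
  by rewrite sum_nat_const card_ord.
by apply: s_const; apply: leq_trans le_in.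
Qed.

Lemma rpos_const i : i < n -> rpos s i = i.+1 * k.
Proof. by move=> lt_in; rewrite /rpos (lpos_const (ltnW lt_in)) s_const //; lia. Qed.

Lemma leq_lpos_const i j : i <= n -> j <= n -> (lpos s i <= lpos s j) = (i <= j).
Proof. by move=> le_in le_jn; rewrite !lpos_const // ltnS leq_pmul2r. Qed.

Lemma ltn_lpos_const i j : i <= n -> j <= n -> (lpos s i < lpos s j) = (i < j).
Proof. by move=> le_in le_jn; rewrite ltnNge leq_lpos_const // -ltnNge. Qed.

Lemma in_batch_const (b : minibatch) g : b.1 < n -> b.2 < n -> g < n ->
  in_batch s b g = (b.1 <= g <= b.2).
Proof.
move=> lt_1n lt_2n lt_gn; rewrite /in_batch /lb /rb !rpos_const // leq_pmul2r //.
by rewrite (leq_lpos_const (ltnW lt_1n) (ltnW lt_gn)).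
Qed.

Lemma sb_const (b : minibatch) : b.1 <= b.2 < n -> sb s b = (b.2.+1 - b.1) * k.
Proof.
case/andP=> le_12 lt_2n; have le_1n := leq_trans le_12 (ltnW lt_2n).
rewrite /sb /rb /lb rpos_const // lpos_const // mulnBl.
have : b.1 * k + k <= b.2.+1 * k by rewrite -mulSnr leq_pmul2r.
lia.
Qed.

Variable bs : seq minibatch.
Hypothesis bs_valid : valid_batches n s bs.
Local Notation B u := (nth (0, 0) bs u).
Local Notation T := (serving_batch s bs).

Lemma valid_batches_const u : u < size bs -> (B u).1 <= (B u).2 < n.
Proof.
move=> lt_u; have [lt_1n lt_2n] := valid_batches_nth bs_valid lt_u.
by rewrite (leq_lpos_const (ltnW lt_1n) (ltnW lt_2n)) => ->.
Qed.

Lemma batch_gain_le_delay u : u < size bs ->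
  (lb s (B u) - 1) * #|[set g : 'I_n | T g == u]| <=
  #|[set g : 'I_n | u < T g]| * sb s (B u).
Proof.
move=> lt_u; have /andP[le_12 lt_2n] := valid_batches_const lt_u.
have lt_1n := leq_ltn_trans le_12 lt_2n.
have served_le : #|[set g : 'I_n | T g == u]| <= (B u).2.+1 - (B u).1.
  rewrite -(card_ord_interval _ lt_2n); apply/subset_leq_card/subsetP => g.
  rewrite !inE => /eqP T_g; have lt_T : T g < size bs by rewrite T_g.
  by have := serving_batch_in lt_T; rewrite T_g in_batch_const.
have later_ge : (B u).1 <= #|[set g : 'I_n | u < T g]|.
  rewrite -{1}(card_ord_ltn (ltnW lt_1n)); apply/subset_leq_card/subsetP => g.
  rewrite !inE => lt_g; apply: (served_later (g := g) bs_valid lt_u).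
  by rewrite /lb (ltn_lpos_const (ltnW (ltn_ord g)) (ltnW lt_1n)).
rewrite /lb (lpos_const (ltnW lt_1n)) sb_const ?le_12 // subn1 /=.
apply: (@leq_trans ((B u).1 * ((B u).2.+1 - (B u).1) * k)).
  by rewrite mulnAC leq_mul2r leq_mul2l served_le !orbT.
by rewrite -mulnA leq_mul2r later_ge orbT.
Qed.

Lemma sum_batch_gain_le_delay :
  2 * \sum_(g < n) batch_gain s bs g <= \sum_(g < n) batch_delay s bs g.
Proof.
rewrite sum_batch_gain sum_batch_delay big_distrr leq_sum //= => u _.
by rewrite [leqRHS]mulnCA leq_pmul2l // batch_gain_le_delay.
Qed.
End UniformSizes.

Theorem theorem1 (n k : nat) (s nr : nat -> nat) :
  0 < k ->
  (forall i, i < n -> s i = k) ->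
  (forall i, i < n -> nr i = 1) ->
  forall bs : seq minibatch, valid_batches n s bs ->
  v n s nr [::] <= v n s nr bs.
Proof.
move=> k_gt0 s_const nr_1 bs bs_valid.
have s_gt0 i : i < n -> 0 < s i by move/s_const->.
have nr_sum f : \sum_(g < n) nr g * f g = \sum_(g < n) f g.
  by apply: eq_bigr => g _; rewrite nr_1 ?mul1n.
have := v_accounting bs_valid s_gt0 nr; rewrite !nr_sum.
have := sum_batch_gain_le_delay k_gt0 s_const bs_valid.
lia.
Qed.
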